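(* Let $t\in[0,T]$ and let $X\in\mathbb{L}^\infty(\mathbb{R},\mathcal{F}_T)$ be such that $X>0$ a.s. Then there exists a unique $Z_t\in\mathbb{L}^0(\mathbb{R},\mathcal{F}_t)$ with $\operatorname{ess\,sup}_{\mathcal{F}_0}(Z_t)\in\mathbb{R}$ a.s. that satisfies $$\operatorname{ess\,sup}_{\mathcal{F}_0}(Z_t1_{F_t})=\operatorname{ess\,sup}_{\mathcal{F}_0}(X1_{F_t})\quad\text{for all }F_t\in\mathcal{F}_t.$$
   Context: Let $(\Omega,\mathcal{F},\mathbb{P})$ be a complete probability space and $(\mathcal{F}_t)_{t\in[0,T]}$ a filtration of complete sub-$\sigma$-algebras of $\mathcal{F}$ ($\mathcal{F}_s\subseteq\mathcal{F}_t$ for $s\le t$). $\mathbb{L}^0(G,\mathcal{G})$ denotes the $\mathcal{G}$-measurable random variables a.s. valued in $G$ and $\mathbb{L}^\infty(G,\mathcal{G})$ the essentially bounded ones. For a sub-$\sigma$-algebra $\mathcal{G}$, $\operatorname{ess\,sup}_{\mathcal{G}}(Y)$ is the smallest (a.s.) $\mathcal{G}$-measurable $\overline{\mathbb{R}}$-valued random variable dominating $Y$ a.s. *)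

From HB Require Import structures.
From mathcomp Require Import all_boot all_order all_algebra.
From mathcomp Require Import all_classical all_reals all_analysis measurable_realfun.
Set Implicit Arguments. Unset Strict Implicit. Unset Printing Implicit Defensive.
Import Order.TTheory GRing.Theory Num.Theory.
Local Open Scope classical_set_scope.
Local Open Scope ring_scope.

Definition is_sub_sigma_alg d (T : measurableType d) (G : set (set T)) :=
  sigma_algebra setT G /\ G `<=` measurable.

Definition complete_wrt d (T : measurableType d) (R : realType)
  (P : probability T R) (G : set (set T)) :=
  P.-negligible `<=` G.

Definition G_measurable d (T : measurableType d) (R : realType)
  (G : set (set T)) (f : T -> R) :=
  forall B : set R, measurable B -> G (f @^-1` B).

Definition G_emeasurable d (T : measurableType d) (R : realType)
  (G : set (set T)) (f : T -> \bar R) :=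
  forall B : set (\bar R), measurable B -> G (f @^-1` B).

Definition is_cond_ess_sup d (T : measurableType d) (R : realType)
  (P : probability T R) (G : set (set T)) (Y : T -> R) (S : T -> \bar R) :=
  [/\ G_emeasurable G S,
      {ae P, forall x, ((Y x)%:E <= S x)%E} &
      forall S' : T -> \bar R, G_emeasurable G S' ->
        {ae P, forall x, ((Y x)%:E <= S' x)%E} ->
        {ae P, forall x, (S x <= S' x)%E}].

Definition mul_ind d (T : measurableType d) (R : realType)
  (Y : T -> R) (F : set T) : T -> R :=
  fun x => Y x * \1_F x.

From HB Require Import structures.
From mathcomp Require Import all_boot all_order all_algebra.
From mathcomp Require Import all_classical all_reals all_analysis measurable_realfun.
Set Implicit Arguments. Unset Strict Implicit. Unset Printing Implicit Defensive.
Import Order.TTheory GRing.Theory Num.Theory.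
Local Open Scope classical_set_scope.
Local Open Scope ring_scope.

(* For each rational q, an exhaustion argument on the measure yields a maximal
   G-set B_q on which Y <= q a.e.; then x |-> inf {q | x \in B_q} is the
   G-conditional essential supremum of Y, for any real function Y.
   Take Z := ess sup_{F_t} X, which is finite since X is bounded.  For F in F_t,
   the function equal to ess sup_{F_0}(X 1_F) on F and to +oo off F is
   F_t-measurable and dominates X, hence dominates Z on F; together with X <= Z
   this gives ess sup_{F_0}(Z 1_F) = ess sup_{F_0}(X 1_F).
   If Z_1 and Z_2 both have this property, testing it on F = {Z_2 <= 0} shows
   Z_2 > 0 (as X > 0), and testing it on F = {Z_2 < q < Z_1} for rationals
   q > 0 shows that these sets are null, so Z_1 <= Z_2; by symmetry
   Z_1 = Z_2. *)

Section sub_sigma_algebra.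
Context d (T : measurableType d) (R : realType) (G : set (set T)).
Hypothesis sG : sigma_algebra setT G.

Lemma sigma_algebraT : G setT.
Proof. by rewrite -(measurable_g_measurableTypeE sG); exact: measurableT. Qed.

Lemma sigma_algebraI A B : G A -> G B -> G (A `&` B).
Proof. by rewrite -(measurable_g_measurableTypeE sG); exact: measurableI. Qed.

Lemma sigma_algebra_bigcup_rat (D : set rat) (F : rat -> set T) :
  (forall q, D q -> G (F q)) -> G (\bigcup_(q in D) F q).
Proof.
rewrite bigcup_mkcond -(measurable_g_measurableTypeE sG) => GF.
by apply: bigcupT_measurable_rat => q; case: ifPn => [/set_mem /GF|_].
Qed.

Lemma g_sigma_measurable_funP d' (U : measurableType d') (f : T -> U) :
  (forall B, measurable B -> G (f @^-1` B)) <->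
  measurable_fun (setT : set (g_sigma_algebraType G)) f.
Proof.
split=> mf.
  by move=> _ B mB; rewrite setTI (measurable_g_measurableTypeE sG); exact: mf.
move=> B mB; rewrite -(measurable_g_measurableTypeE sG) -[_ @^-1` _]setTI.
exact: mf.
Qed.

Lemma G_emeasurable_cst (c : \bar R) : G_emeasurable G (cst c).
Proof. by apply/g_sigma_measurable_funP; exact: measurable_cst. Qed.

Lemma G_measurable_fine (f : T -> \bar R) :
  G_emeasurable G f -> G_measurable G (fine \o f).
Proof.
move/g_sigma_measurable_funP => mf; apply/g_sigma_measurable_funP.
exact: measurableT_comp.
Qed.

Lemma G_emeasurable_lt (f : T -> \bar R) :
  (forall r : R, G [set x | (f x < r%:E)%E]) -> G_emeasurable G f.
Proof.
move=> Gf; apply/g_sigma_measurable_funP.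
apply: (measurability _ (ErealGenInftyO.measurableE R)) => _ [_ [r ->] <-].
rewrite setTI preimage_itvNyo (measurable_g_measurableTypeE sG); exact: Gf.
Qed.

End sub_sigma_algebra.

Lemma ae_forall_countable d (T : measurableType d) (R : realType)
    (mu : {measure set T -> \bar R}) (I : countType) (Q : I -> T -> Prop) :
  (forall i, {ae mu, forall x, Q i x}) -> {ae mu, forall x, forall i, Q i x}.
Proof.
move=> hQ; have : mu.-negligible
    (\bigcup_n oapp (fun i => ~` [set x | Q i x]) set0 (unpickle n)).
  apply: negligible_bigcup => n.
  by case: unpickle => [i|]; [exact: hQ|exact: negligible_set0].
apply: negligibleS => x /= /existsNP [i nQ].
by exists (pickle i) => //; rewrite pickleK.
Qed.

Section essential_maximum.
Context d (T : measurableType d) (R : realType).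
Variables (mu : {finite_measure set T -> \bar R}) (C : set (set T)).
Hypotheses (CM : C `<=` measurable) (C0 : C set0)
  (C_bigcup : forall F : (set T)^nat, (forall n, C (F n)) -> C (\bigcup_n F n)).

Let msup := ereal_sup [set mu B | B in C].

Let msup_fin_num : msup \is a fin_num.
Proof.
rewrite ge0_fin_numE; last first.
  by apply: ereal_sup_ubound; exists set0; rewrite ?measure0.
apply: (@le_lt_trans _ _ (mu setT)).
  apply: ge_ereal_sup => _ [B CB <-].
  by apply: le_measure; rewrite ?inE //; exact: CM.
by rewrite -ge0_fin_numE ?fin_num_measure.
Qed.

Lemma measure_sup_attained : exists2 B, C B & mu B = msup.
Proof.
have approx n : exists B, C B /\ (msup < mu B + (n.+1%:R^-1)%:E)%E.
  have : (msup - (n.+1%:R^-1)%:E < msup)%E.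
    by rewrite lteBlDr // lteDl // lte_fin invr_gt0.
  by move=> /ereal_sup_gt [_ [B CB <-]]; rewrite lteBlDr // => ?; exists B.
have [Bn /all_and2 [CBn muBn]] := choice approx.
have CB : C (\bigcup_n Bn n) := C_bigcup CBn.
exists (\bigcup_n Bn n) => //; apply/le_anti/andP; split.
  by apply: ereal_sup_ubound; exists (\bigcup_n Bn n).
apply/lee_addgt0Pr => e /ltr_add_invr [k]; rewrite add0r => ke.
apply: (le_trans (ltW (muBn k))); apply: leeD; last by rewrite lee_fin ltW.
by apply: le_measure; rewrite ?inE //; [exact: CM|exact: CM|exact: bigcup_sup].
Qed.

Lemma ess_maximal_set :
  exists2 B, C B & forall B', C B' -> {ae mu, forall x, B' x -> B x}.
Proof.
have [B CB muB] := measure_sup_attained.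
exists B => // B' CB'; have [mB mB'] := (CM CB, CM CB').
have CBB' : C (B `|` B').
  by rewrite -bigcup2E; apply: C_bigcup => -[|[|n]] //=.
have mBB' : measurable (B' `\` B) by exact: measurableD.
have muD : mu (B' `\` B) = 0.
  have : (mu B + mu (B' `\` B) <= mu B + 0)%E.
    rewrite adde0 -measureU ?setDIK // setUDr setDv setD0 muB.
    by apply: ereal_sup_ubound; exists (B `|` B').
  rewrite leeD2lE ?fin_num_measure // => le0.
  by apply/eqP; rewrite eq_le le0 measure_ge0.
by apply: (negligibleS _ (proj2 (negligibleP _ mBB') muD)) => x /= /not_implyP.
Qed.

End essential_maximum.

Lemma ereal_dense_rat (R : realType) (a b : \bar R) : (a < b)%E ->
  exists q : rat, (a < (ratr q)%:E)%E /\ ((ratr q)%:E < b)%E.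
Proof.
have dense (x y : R) : x < y -> exists q : rat, x < ratr q /\ ratr q < y.
  by move=> /rat_in_itvoo [q]; rewrite in_itv /= => /andP[? ?]; exists q.
case: a => [a||]; case: b => [b||] //=.
- by rewrite lte_fin => /dense [q [? ?]]; exists q; rewrite !lte_fin.
- have [q [? ?]] : exists q : rat, a < ratr q /\ ratr q < a + 1.
    by apply: dense; rewrite ltrDl ltr01.
  by exists q; rewrite lte_fin ltry.
- have [q [? ?]] : exists q : rat, b - 1 < ratr q /\ ratr q < b.
    by apply: dense; rewrite ltrBlDr ltrDl ltr01.
  by exists q; rewrite lte_fin ltNyr.
- by move=> _; exists 0; rewrite ltNyr ltry.
Qed.

Section rat_inf.
Context {T : Type} {R : realType} (B : rat -> set T).

Definition rat_inf (x : T) : \bar R :=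
  ereal_inf [set (ratr q)%:E | q in [set q | B q x]].

Lemma rat_inf_le x q : B q x -> (rat_inf x <= (ratr q)%:E)%E.
Proof. by move=> Bqx; apply: ereal_inf_lbound; exists q. Qed.

Lemma rat_inf_lt x r : (rat_inf x < r%:E)%E <-> exists2 q, B q x & ratr q < r.
Proof.
split; first by move=> /ereal_inf_lt [_ [q Bqx <-]]; rewrite lte_fin; exists q.
by move=> [q /rat_inf_le Bqx qr]; apply: le_lt_trans Bqx _; rewrite lte_fin.
Qed.

End rat_inf.

Section cond_ess_sup_existence.
Context d (T : measurableType d) (R : realType) (P : probability T R).
Variables (G : set (set T)) (Y : T -> R).
Hypotheses (sG : sigma_algebra setT G) (GM : G `<=` measurable).

Definition ae_le_sets (r : R) : set (set T) :=
  [set B | G B /\ {ae P, forall x, B x -> Y x <= r}].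

Lemma ae_le_sets_maximal r : exists2 B, ae_le_sets r B &
  forall B', ae_le_sets r B' -> {ae P, forall x, B' x -> B x}.
Proof.
apply: ess_maximal_set => [B [GB _]|| F CF]; first exact: GM.
  by split; [case: sG|exact: aeW].
split; first by case: sG => _ _; apply => n; case: (CF n).
apply: filterS (ae_forall_countable (fun n => (CF n).2)) => x YF [n _].
exact: YF.
Qed.

Section rat_inf_cond_ess_sup.
Variable B : rat -> set T.
Hypotheses (B_le : forall q, ae_le_sets (ratr q) (B q))
  (B_max : forall q B',
    ae_le_sets (ratr q) B' -> {ae P, forall x, B' x -> B q x}).

Lemma is_cond_ess_sup_rat_inf : is_cond_ess_sup P G Y (rat_inf B).
Proof.
split.
- apply: G_emeasurable_lt => // r.
  have -> : [set x | (rat_inf B x < r%:E)%E] =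
      \bigcup_(q in [set q | ratr q < r]) B q.
    by apply/seteqP; split=> x; rewrite /= rat_inf_lt => -[q]; exists q.
  by apply: sigma_algebra_bigcup_rat => // q _; case: (B_le q).
- apply: filterS (ae_forall_countable (fun q => (B_le q).2)) => x YB.
  by rewrite leNgt; apply/negP => /rat_inf_lt [q /YB]; rewrite leNgt => /negP.
- move=> S' mS' YS'.
  have S'_le q : ae_le_sets (ratr q) [set x | (S' x <= (ratr q)%:E)%E].
    split.
      have := mS' _ (emeasurable_itv `]-oo, (ratr q)%:E]).
      by rewrite preimage_itvNyc.
    by apply: filterS YS' => x YS'x S'q; rewrite -lee_fin (le_trans YS'x).
  apply: filterS (ae_forall_countable (fun q => B_max (S'_le q))) => x S'B.
  rewrite leNgt; apply/negP => /ereal_dense_rat [q [S'q qB]].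
  by have := lt_le_trans qB (rat_inf_le (S'B q (ltW S'q))); rewrite ltxx.
Qed.

End rat_inf_cond_ess_sup.

Lemma cond_ess_sup_exists : exists S, is_cond_ess_sup P G Y S.
Proof.
have /choice [B /all_and2 [B_le B_max]] : forall q : rat, exists B,
    ae_le_sets (ratr q) B /\
    forall B', ae_le_sets (ratr q) B' -> {ae P, forall x, B' x -> B x}.
  by move=> q; have [B] := ae_le_sets_maximal (ratr q); exists B.
by exists (rat_inf B); exact: is_cond_ess_sup_rat_inf.
Qed.

End cond_ess_sup_existence.

Section mul_ind.
Context d (T : measurableType d) (R : realType) (Y : T -> R) (F : set T).

Lemma mul_indE_in x : F x -> mul_ind Y F x = Y x.
Proof. by move=> Fx; rewrite /mul_ind indicE mem_set // mulr1. Qed.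

Lemma mul_indE_notin x : ~ F x -> mul_ind Y F x = 0.
Proof. by move=> Fx; rewrite /mul_ind indicE memNset // mulr0. Qed.

End mul_ind.

Lemma mul_indT d (T : measurableType d) (R : realType) (Y : T -> R) :
  mul_ind Y setT = Y.
Proof. by apply/funext => x; rewrite mul_indE_in. Qed.

Section cond_ess_sup_bounds.
Context d (T : measurableType d) (R : realType) (P : probability T R).
Variables (G : set (set T)) (Y : T -> R) (S : T -> \bar R).
Hypotheses (sG : sigma_algebra setT G) (YS : is_cond_ess_sup P G Y S).

Lemma cond_ess_sup_le_cst (c : \bar R) :
  {ae P, forall x, ((Y x)%:E <= c)%E} -> {ae P, forall x, (S x <= c)%E}.
Proof. by case: YS => _ _; apply; exact: G_emeasurable_cst. Qed.

Lemma cond_ess_sup_fin_num (M : R) :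
  {ae P, forall x, Y x <= M} -> {ae P, forall x, S x \is a fin_num}.
Proof.
move=> YM; have SM : {ae P, forall x, (S x <= M%:E)%E}.
  by apply: cond_ess_sup_le_cst; apply: filterS YM => x; rewrite lee_fin.
have [_ YSd _] := YS; apply: filterS2 YSd SM => x YSx SMx.
by rewrite fin_numElt (lt_le_trans (ltNyr _) YSx) (le_lt_trans SMx (ltry _)).
Qed.

End cond_ess_sup_bounds.

Section cond_ess_sup_agree.
Context d (T : measurableType d) (R : realType) (P : probability T R).
Variables (G0 Gt : set (set T)).
Hypotheses (sG0 : sigma_algebra setT G0) (G0M : G0 `<=` measurable)
  (sGt : sigma_algebra setT Gt) (G0t : G0 `<=` Gt).

Definition cond_ess_sup_agree (Z Y : T -> R) := forall F, Gt F ->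
  exists S, is_cond_ess_sup P G0 (mul_ind Z F) S /\
            is_cond_ess_sup P G0 (mul_ind Y F) S.

Lemma cond_ess_sup_agree_tower (Y Z : T -> R) St : is_cond_ess_sup P Gt Y St ->
  {ae P, forall x, St x = (Z x)%:E} -> cond_ess_sup_agree Z Y.
Proof.
move=> [_ YSt St_min] StZ F GtF.
have [S [mS YS S_min]] := cond_ess_sup_exists P (mul_ind Y F) sG0 G0M.
exists S; split => //; split => //.
- pose SF x := if x \in F then S x else +oo%E.
  have mSF : G_emeasurable Gt SF.
    apply: G_emeasurable_lt => // r.
    have -> : [set x | (SF x < r%:E)%E] = F `&` [set x | (S x < r%:E)%E].
      apply/seteqP; split => x /=; rewrite /SF.
        by case: ifPn => [/set_mem|].
      by case=> /mem_set ->.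
    apply: sigma_algebraI => //; apply: G0t.
    by have := mS _ (emeasurable_itv `]-oo, r%:E[); rewrite preimage_itvNyo.
  have YSF : {ae P, forall x, ((Y x)%:E <= SF x)%E}.
    apply: filterS YS => x YSx; rewrite /SF; case: ifPn => [/set_mem Fx|_].
      by rewrite -(mul_indE_in Y Fx).
    exact: leey.
  apply: filterS3 StZ (St_min _ mSF YSF) YS => x StZx; rewrite /SF.
  case: ifPn => [/set_mem Fx|]; first by rewrite (mul_indE_in Z Fx) -StZx.
  rewrite notin_setE => nFx _.
  by rewrite (mul_indE_notin Y nFx) (mul_indE_notin Z nFx).
- have YZ : {ae P, forall x, Y x <= Z x}.
    by apply: filterS2 YSt StZ => x; rewrite -lee_fin => + <-.
  move=> S' mS' ZS'; apply: S_min => //.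
  apply: filterS2 YZ ZS' => x YZx; apply: le_trans.
  by rewrite lee_fin /mul_ind ler_wpM2r // indicE ler0n.
Qed.

Lemma cond_ess_sup_agree_gt0 (Z Y : T -> R) : G_measurable Gt Z ->
  {ae P, forall x, 0 < Y x} -> cond_ess_sup_agree Z Y ->
  {ae P, forall x, 0 < Z x}.
Proof.
move=> mZ Y_gt0 ZY; pose F := [set x | Z x <= 0].
have GtF : Gt F.
  by have := mZ _ (measurable_itv `]-oo, 0]); rewrite preimage_itvNyc.
have [S [ZS [_ YS _]]] := ZY _ GtF.
have S_le0 : {ae P, forall x, (S x <= 0%:E)%E}.
  apply: (cond_ess_sup_le_cst sG0 ZS); apply: aeW => x; rewrite lee_fin.
  have [Fx|nFx] := pselect (F x); last by rewrite (mul_indE_notin Z nFx).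
  by rewrite (mul_indE_in Z Fx).
apply: filterS3 Y_gt0 YS S_le0 => x Yx YSx S0x; rewrite ltNge; apply/negP => Fx.
by have := le_trans YSx S0x; rewrite (mul_indE_in Y Fx) lee_fin leNgt Yx.
Qed.

Lemma cond_ess_sup_agree_le (Z1 Z2 Y : T -> R) :
  G_measurable Gt Z1 -> G_measurable Gt Z2 -> {ae P, forall x, 0 < Z2 x} ->
  cond_ess_sup_agree Z1 Y -> cond_ess_sup_agree Z2 Y ->
  {ae P, forall x, Z1 x <= Z2 x}.
Proof.
move=> mZ1 mZ2 Z2_gt0 Z1Y Z2Y.
have not_between (q : rat) : {ae P, forall x, ~ (Z2 x < ratr q < Z1 x)};
    last first.
  apply: filterS (ae_forall_countable not_between) => x Z12.
  rewrite leNgt; apply/negP => /rat_in_itvoo [q]; rewrite in_itv /=; exact: Z12.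
have [q_le0|q_gt0] := leP (ratr q : R) 0.
  apply: filterS Z2_gt0 => x Z2x /andP[Z2q _].
  by have := lt_le_trans (lt_trans Z2x Z2q) q_le0; rewrite ltxx.
pose F := [set x | Z2 x < ratr q < Z1 x].
have GtF : Gt F.
  have -> : F = Z2 @^-1` `]-oo, ratr q[ `&` Z1 @^-1` `]ratr q, +oo[.
    by apply/seteqP; split => x; rewrite /= !in_itv /= ?andbT => /andP.
  by apply: sigma_algebraI => //; [exact: mZ2|exact: mZ1].
have [S1 [[_ Z1S1 _] [_ _ S1_min]]] := Z1Y F GtF.
have [S2 [Z2S2 [mS2 YS2 _]]] := Z2Y F GtF.
have S2q : {ae P, forall x, (S2 x <= (ratr q)%:E)%E}.
  apply: (cond_ess_sup_le_cst sG0 Z2S2); apply: aeW => x; rewrite lee_fin.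
  have [Fx|nFx] := pselect (F x); last by rewrite (mul_indE_notin Z2 nFx) ltW.
  by rewrite (mul_indE_in Z2 Fx); case/andP: Fx => Z2q _; exact: ltW.
apply: filterS3 Z1S1 (S1_min _ mS2 YS2) S2q => x Z1S1x S12 S2qx Fx.
have := le_trans Z1S1x (le_trans S12 S2qx); rewrite (mul_indE_in Z1 Fx) lee_fin.
by case/andP: Fx => _; rewrite ltNge => /negP.
Qed.

Lemma cond_ess_sup_agree_unique (Z1 Z2 Y : T -> R) :
  {ae P, forall x, 0 < Y x} -> G_measurable Gt Z1 -> G_measurable Gt Z2 ->
  cond_ess_sup_agree Z1 Y -> cond_ess_sup_agree Z2 Y ->
  {ae P, forall x, Z1 x = Z2 x}.
Proof.
move=> Y_gt0 mZ1 mZ2 Z1Y Z2Y.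
have Z1_gt0 := cond_ess_sup_agree_gt0 mZ1 Y_gt0 Z1Y.
have Z2_gt0 := cond_ess_sup_agree_gt0 mZ2 Y_gt0 Z2Y.
have Z12 := cond_ess_sup_agree_le mZ1 mZ2 Z2_gt0 Z1Y Z2Y.
have Z21 := cond_ess_sup_agree_le mZ2 mZ1 Z1_gt0 Z2Y Z1Y.
by apply: filterS2 Z12 Z21 => x ? ?; apply/le_anti/andP.
Qed.

End cond_ess_sup_agree.

Theorem mainTheorem18 (d : measure_display) (Omega : measurableType d)
  (R : realType) (P : probability Omega R)
  (Tend : R) (Filt : R -> set (set Omega))
  (P_complete : measure_is_complete P)
  (Filt_sub : forall s, 0 <= s <= Tend -> is_sub_sigma_alg (Filt s))
  (Filt_complete : forall s, 0 <= s <= Tend -> complete_wrt P (Filt s))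
  (Filt_mono : forall s u, 0 <= s -> s <= u -> u <= Tend ->
                 Filt s `<=` Filt u)
  (t : R) (ht : 0 <= t <= Tend)
  (X : Omega -> R)
  (X_meas : G_measurable (Filt Tend) X)
  (X_bdd : exists M : R, {ae P, forall w, `|X w| <= M})
  (X_pos : {ae P, forall w, 0 < X w}) :
  (exists Z : Omega -> R,
     [/\ G_measurable (Filt t) Z,
         (exists S, is_cond_ess_sup P (Filt 0) Z S /\
                    {ae P, forall w, S w \is a fin_num}) &
         forall Ft, Filt t Ft ->
           exists S, is_cond_ess_sup P (Filt 0) (mul_ind Z Ft) S /\
                     is_cond_ess_sup P (Filt 0) (mul_ind X Ft) S]) /\
  (forall Z1 Z2 : Omega -> R,
     G_measurable (Filt t) Z1 ->
     (exists S, is_cond_ess_sup P (Filt 0) Z1 S /\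
                {ae P, forall w, S w \is a fin_num}) ->
     (forall Ft, Filt t Ft ->
        exists S, is_cond_ess_sup P (Filt 0) (mul_ind Z1 Ft) S /\
                  is_cond_ess_sup P (Filt 0) (mul_ind X Ft) S) ->
     G_measurable (Filt t) Z2 ->
     (exists S, is_cond_ess_sup P (Filt 0) Z2 S /\
                {ae P, forall w, S w \is a fin_num}) ->
     (forall Ft, Filt t Ft ->
        exists S, is_cond_ess_sup P (Filt 0) (mul_ind Z2 Ft) S /\
                  is_cond_ess_sup P (Filt 0) (mul_ind X Ft) S) ->
     {ae P, forall w, Z1 w = Z2 w}).
Proof.
have [t_ge0 t_le] := andP ht.
have [sF0 F0M] := Filt_sub 0 ltac:(by rewrite lexx (le_trans t_ge0 t_le)).
have [sFt FtM] := Filt_sub t ht.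
have F0t : Filt 0 `<=` Filt t by exact: Filt_mono.
have [M XM] : exists M, {ae P, forall w, X w <= M}.
  have [M XM] := X_bdd; exists M.
  by apply: filterS XM => w /(le_trans (ler_norm _)).
have [St XSt] := cond_ess_sup_exists P X sFt FtM.
have StE : {ae P, forall w, St w = (fine (St w))%:E}.
  by apply: filterS (cond_ess_sup_fin_num sFt XSt XM) => w /fineK.
have agreeZ := cond_ess_sup_agree_tower sF0 F0M sFt F0t XSt StE.
split.
- exists (fine \o St); split => //.
    by case: XSt => mSt _ _; exact: G_measurable_fine.
  have [S [ZS XS]] := agreeZ _ (sigma_algebraT sFt).
  rewrite !mul_indT in ZS XS.
  by exists S; split => //; exact: (cond_ess_sup_fin_num sF0 XS XM).
- move=> Z1 Z2 mZ1 _ Z1X mZ2 _ Z2X.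
  exact: (cond_ess_sup_agree_unique sF0 sFt X_pos mZ1 mZ2 Z1X Z2X).
Qed.
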